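(* Let $N\in\mathbb{C}^{m\times n}$ have rank $r$ and singular value decomposition $N=U\begin{pmatrix}\Sigma & 0\\ 0 & 0\end{pmatrix}V^{\ast}$, where $\Sigma\in\mathbb{C}^{r\times r}$ is diagonal with positive diagonal entries and $U\in\mathbb{C}^{m\times m}$, $V\in\mathbb{C}^{n\times n}$ are unitary. Let $X\in\mathbb{C}^{m\times m}$ and $Y\in\mathbb{C}^{n\times n}$ be nonsingular and let $M=XNY$. Assume that $X=U\begin{pmatrix}X_{1} & 0\\ X_{2} & X_{4}\end{pmatrix}U^{\ast}$ for some $X_{1}\in\mathbb{C}^{r\times r}$, $X_{2}\in\mathbb{C}^{(m-r)\times r}$, $X_{4}\in\mathbb{C}^{(m-r)\times(m-r)}$, and that $Y=V\begin{pmatrix}Y_{1} & Y_{3}\\ 0 & Y_{4}\end{pmatrix}V^{\ast}$ for some $Y_{1}\in\mathbb{C}^{r\times r}$, $Y_{3}\in\mathbb{C}^{r\times(n-r)}$, $Y_{4}\in\mathbb{C}^{(n-r)\times(n-r)}$. Then $$M^{\dagger}=(I+L^{\ast})(I+LL^{\ast})^{-1}N^{\dagger}N(Y^{-1}N^{\dagger}X^{-1})NN^{\dagger}(I+R^{\ast}R)^{-1}(I+R^{\ast}),$$ where $R=XE_{N}X^{-1}(E_{N}-I)$ and $L=(F_{N}-I)Y^{-1}F_{N}Y$.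
   Context: For a complex matrix $A$, $A^{\ast}$ is its conjugate transpose and $A^{\dagger}$ its Moore--Penrose inverse. $E_{A}:=I-AA^{\dagger}$ and $F_{A}:=I-A^{\dagger}A$ (the orthogonal projectors onto $\mathcal{N}(A^{\ast})$ and $\mathcal{N}(A)$). $I$ denotes an identity matrix of the appropriate size. *)

(* Complex matrices over an arbitrary numClosedFieldType C
   (e.g. algC, or R[i] for a real closed field R). *)
From HB Require Import structures.
From mathcomp Require Import all_boot all_order all_algebra.
Set Implicit Arguments. Unset Strict Implicit. Unset Printing Implicit Defensive.
Import Order.TTheory GRing.Theory Num.Theory.
Local Open Scope ring_scope.

Definition ctmx (C : numClosedFieldType) (m n : nat) (A : 'M[C]_(m, n)) : 'M[C]_(n, m) :=
  (map_mx Num.conj A)^T.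

Definition unitary (C : numClosedFieldType) (n : nat) (U : 'M[C]_n) : Prop :=
  U *m ctmx U = 1%:M /\ ctmx U *m U = 1%:M.

(* B is the Moore--Penrose inverse of A (the four Penrose equations;
   such B exists and is unique) *)
Definition is_MP_inverse (C : numClosedFieldType) (m n : nat)
    (A : 'M[C]_(m, n)) (B : 'M[C]_(n, m)) : Prop :=
  [/\ A *m B *m A = A, B *m A *m B = B,
      ctmx (A *m B) = A *m B & ctmx (B *m A) = B *m A].

From HB Require Import structures.
From mathcomp Require Import all_boot all_order all_algebra.
Import Order.TTheory GRing.Theory Num.Theory.
Local Open Scope ring_scope.
Set Implicit Arguments. Unset Strict Implicit.

(* Replacing (N, X, Y) by (U^H N V, U^H X U, V^H Y V) transforms both M^dagger
   and the right-hand side by A |-> V^H A U, so we may assume U = V = I.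
   Then N^dagger = diag(S^-1, 0), R and L each have a single nonzero block
   K = X2 X1^-1 and H = Y1^-1 Y3, and M = [I; K] (X1 S Y1) [I, H] is a
   full-rank factorization F Z G, whose Moore-Penrose inverse
   G^H (G G^H)^-1 Z^-1 (F^H F)^-1 F^H is exactly the right-hand side. *)

Section ConjugateTranspose.
Variable C : numClosedFieldType.

Lemma ctmxM m n k (A : 'M[C]_(m, n)) (B : 'M[C]_(n, k)) :
  ctmx (A *m B) = ctmx B *m ctmx A.
Proof. by rewrite /ctmx map_mxM trmx_mul. Qed.

Lemma ctmxK m n (A : 'M[C]_(m, n)) : ctmx (ctmx A) = A.
Proof. by apply/matrixP=> i j; rewrite !mxE conjCK. Qed.

Lemma ctmx1 n : ctmx (1%:M : 'M[C]_n) = 1%:M.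
Proof. by rewrite /ctmx map_mx1 trmx1. Qed.

Lemma ctmx0 m n : ctmx (0 : 'M[C]_(m, n)) = 0.
Proof. by rewrite /ctmx map_mx0 trmx0. Qed.

Lemma ctmx_invmx n (A : 'M[C]_n) : ctmx (invmx A) = invmx (ctmx A).
Proof. by rewrite /ctmx map_invmx trmx_inv. Qed.

Lemma ctmx_block m1 m2 n1 n2 (A : 'M[C]_(m1, n1)) (B : 'M[C]_(m1, n2))
    (D : 'M[C]_(m2, n1)) (E : 'M[C]_(m2, n2)) :
  ctmx (block_mx A B D E) = block_mx (ctmx A) (ctmx D) (ctmx B) (ctmx E).
Proof. by rewrite /ctmx map_block_mx tr_block_mx. Qed.

Lemma ctmx_row m n1 n2 (A : 'M[C]_(m, n1)) (B : 'M[C]_(m, n2)) :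
  ctmx (row_mx A B) = col_mx (ctmx A) (ctmx B).
Proof. by rewrite /ctmx map_row_mx tr_row_mx. Qed.

Lemma ctmx_col m1 m2 n (A : 'M[C]_(m1, n)) (B : 'M[C]_(m2, n)) :
  ctmx (col_mx A B) = row_mx (ctmx A) (ctmx B).
Proof. by rewrite /ctmx map_col_mx tr_col_mx. Qed.

Lemma mul_ctmx00 n (v : 'rV[C]_n) : (v *m ctmx v) 0 0 = dotmx v v.
Proof. by rewrite dotmxE /ctmx map_trmx. Qed.

Lemma unitmx_1D_ctmx_mul m n (K : 'M[C]_(m, n)) : 1%:M + ctmx K *m K \in unitmx.
Proof.
rewrite unitmxE unitfE; apply/negP => /det0P [v /negP v_neq0 vK0]; apply: v_neq0.
have : v *m (1%:M + ctmx K *m K) *m ctmx v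
       = v *m ctmx v + v *m ctmx K *m ctmx (v *m ctmx K).
  by rewrite mulmxDr mulmx1 mulmxDl ctmxM ctmxK !mulmxA.
rewrite vK0 mul0mx => /esym /(congr1 (fun A : 'M_1 => A 0 0)).
rewrite mxE !mul_ctmx00 mxE => /eqP.
by rewrite paddr_eq0 ?dnorm_ge0 // dnorm_eq0 => /andP [].
Qed.

Lemma unitmx_1D_mul_ctmx m n (K : 'M[C]_(m, n)) : 1%:M + K *m ctmx K \in unitmx.
Proof. by rewrite -{1}[K]ctmxK unitmx_1D_ctmx_mul. Qed.

End ConjugateTranspose.

Section MoorePenrose.
Variable C : numClosedFieldType.

Lemma is_MP_inverse_uniq m n (A : 'M[C]_(m, n)) B B' :
  is_MP_inverse A B -> is_MP_inverse A B' -> B = B'.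
Proof.
case=> ABA BAB ABh BAh [AB'A B'AB' AB'h B'Ah].
have ABE : A *m B = A *m B' *m (A *m B) by rewrite -{1}AB'A !mulmxA.
have B'AE : B' *m A = B' *m A *m (B *m A) by rewrite -{1}ABA !mulmxA.
have BE : B = B *m A *m B'.
  by rewrite -{1}BAB -mulmxA -ABh ABE ctmxM ABh AB'h !mulmxA BAB.
have B'E : B' = B *m A *m B'.
  by rewrite -{1}B'AB' -B'Ah B'AE ctmxM BAh B'Ah -!mulmxA (mulmxA B') B'AB'.
by rewrite {1}BE -B'E.
Qed.

Lemma is_MP_inverse_factor m n k (F : 'M[C]_(m, k)) (Z : 'M[C]_k)
    (G : 'M[C]_(k, n)) Fl Gr :
  Fl *m F = 1%:M -> G *m Gr = 1%:M -> Z \in unitmx ->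
  ctmx (F *m Fl) = F *m Fl -> ctmx (Gr *m G) = Gr *m G ->
  is_MP_inverse (F *m Z *m G) (Gr *m invmx Z *m Fl).
Proof.
move=> FlF GGr uZ FFlh GrGh.
have MMd : F *m Z *m G *m (Gr *m invmx Z *m Fl) = F *m Fl.
  by rewrite !mulmxA -(mulmxA _ G) GGr mulmx1 mulmxK.
have MdM : Gr *m invmx Z *m Fl *m (F *m Z *m G) = Gr *m G.
  by rewrite !mulmxA -(mulmxA _ Fl) FlF mulmx1 mulmxKV.
split; rewrite ?MMd ?MdM //.
- by rewrite !mulmxA -(mulmxA F) FlF mulmx1.
- by rewrite !mulmxA -(mulmxA Gr G) GGr mulmx1.
Qed.

Lemma is_MP_inverse_full_rank_factor m n k (F : 'M[C]_(m, k)) (Z : 'M[C]_k)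
    (G : 'M[C]_(k, n)) :
  ctmx F *m F \in unitmx -> G *m ctmx G \in unitmx -> Z \in unitmx ->
  is_MP_inverse (F *m Z *m G)
    (ctmx G *m invmx (G *m ctmx G) *m invmx Z *m (invmx (ctmx F *m F) *m ctmx F)).
Proof.
move=> uFF uGG uZ; apply: is_MP_inverse_factor => //.
- by rewrite -mulmxA mulVmx.
- by rewrite mulmxA mulmxV.
- by rewrite !ctmxM ctmxK ctmx_invmx ctmxM ctmxK mulmxA.
- by rewrite !ctmxM ctmxK ctmx_invmx ctmxM ctmxK mulmxA.
Qed.

End MoorePenrose.

Section BlockTriangularInverse.
Variable R : comUnitRingType.

Lemma mulmx1_invmx n (A B : 'M[R]_n) : A *m B = 1%:M -> invmx A = B.
Proof.
move=> AB1; have [uA _] := mulmx1_unit AB1.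
by rewrite -[LHS]mulmx1 -AB1 mulKmx.
Qed.

Lemma unitmx_lblock n1 n2 (A : 'M[R]_n1) (B : 'M[R]_(n2, n1)) (D : 'M[R]_n2) :
  (block_mx A 0 B D \in unitmx) = (A \in unitmx) && (D \in unitmx).
Proof. by rewrite !unitmxE det_lblock unitrM. Qed.

Lemma unitmx_ublock n1 n2 (A : 'M[R]_n1) (B : 'M[R]_(n1, n2)) (D : 'M[R]_n2) :
  (block_mx A B 0 D \in unitmx) = (A \in unitmx) && (D \in unitmx).
Proof. by rewrite !unitmxE det_ublock unitrM. Qed.

Lemma invmx_lblock n1 n2 (A : 'M[R]_n1) (B : 'M[R]_(n2, n1)) (D : 'M[R]_n2) :
  A \in unitmx -> D \in unitmx ->
  invmx (block_mx A 0 B D)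
  = block_mx (invmx A) 0 (- (invmx D *m B *m invmx A)) (invmx D).
Proof.
move=> uA uD; apply: mulmx1_invmx; rewrite mulmx_block (scalar_mx_block n1 n2 1).
rewrite !(mulmx0, mul0mx, addr0, add0r) !mulmxV // mulmxN !mulmxA mulmxV //.
by rewrite mul1mx addrN.
Qed.

Lemma invmx_ublock n1 n2 (A : 'M[R]_n1) (B : 'M[R]_(n1, n2)) (D : 'M[R]_n2) :
  A \in unitmx -> D \in unitmx ->
  invmx (block_mx A B 0 D)
  = block_mx (invmx A) (- (invmx A *m B *m invmx D)) 0 (invmx D).
Proof.
move=> uA uD; apply: mulmx1_invmx; rewrite mulmx_block (scalar_mx_block n1 n2 1).
rewrite !(mulmx0, mul0mx, addr0, add0r) !mulmxV // mulmxN !mulmxA mulmxV //.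
by rewrite mul1mx addNr.
Qed.

End BlockTriangularInverse.

Section UnitaryEquivalence.
Variable C : numClosedFieldType.

Definition uconj m n (W1 : 'M[C]_m) (W2 : 'M[C]_n) (A : 'M[C]_(m, n)) :
  'M[C]_(m, n) := W1 *m A *m ctmx W2.

Lemma unitary_ctmx n (W : 'M[C]_n) : unitary W -> unitary (ctmx W).
Proof. by case=> WW' W'W; split; rewrite ctmxK. Qed.

Lemma unitary_unitmx n (W : 'M[C]_n) : unitary W -> W \in unitmx.
Proof. by case=> /mulmx1_unit []. Qed.

Lemma uconjM m n k (W1 : 'M[C]_m) (W2 : 'M[C]_n) (W3 : 'M[C]_k) A B :
  unitary W2 -> uconj W1 W2 A *m uconj W2 W3 B = uconj W1 W3 (A *m B).
Proof.
by case=> _ W2'W2; rewrite /uconj !mulmxA -(mulmxA _ (ctmx W2)) W2'W2 mulmx1.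
Qed.

Lemma uconj_ctmx m n (W1 : 'M[C]_m) (W2 : 'M[C]_n) A :
  ctmx (uconj W1 W2 A) = uconj W2 W1 (ctmx A).
Proof. by rewrite /uconj !ctmxM ctmxK mulmxA. Qed.

Lemma uconjD m n (W1 : 'M[C]_m) (W2 : 'M[C]_n) A B :
  uconj W1 W2 (A + B) = uconj W1 W2 A + uconj W1 W2 B.
Proof. by rewrite /uconj mulmxDr mulmxDl. Qed.

Lemma uconjB m n (W1 : 'M[C]_m) (W2 : 'M[C]_n) A B :
  uconj W1 W2 (A - B) = uconj W1 W2 A - uconj W1 W2 B.
Proof. by rewrite /uconj mulmxBr mulmxBl. Qed.

Lemma uconj1 n (W : 'M[C]_n) : unitary W -> uconj W W 1%:M = 1%:M.
Proof. by case=> WW' _; rewrite /uconj mulmx1. Qed.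

Lemma uconjK m n (W1 : 'M[C]_m) (W2 : 'M[C]_n) A :
  unitary W1 -> unitary W2 -> uconj (ctmx W1) (ctmx W2) (uconj W1 W2 A) = A.
Proof.
case=> _ W1'W1 [_ W2'W2].
by rewrite /uconj ctmxK !mulmxA W1'W1 mul1mx -mulmxA W2'W2 mulmx1.
Qed.

Lemma uconjKV m n (W1 : 'M[C]_m) (W2 : 'M[C]_n) A :
  unitary W1 -> unitary W2 -> uconj W1 W2 (uconj (ctmx W1) (ctmx W2) A) = A.
Proof.
case=> W1W1' _ [W2W2' _].
by rewrite /uconj ctmxK !mulmxA W1W1' mul1mx -mulmxA W2W2' mulmx1.
Qed.

Lemma unitmx_uconj n (W : 'M[C]_n) A :
  unitary W -> (uconj W W A \in unitmx) = (A \in unitmx).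
Proof.
move=> uW; have [uW1 uW2] := (unitary_unitmx uW, unitary_unitmx (unitary_ctmx uW)).
by rewrite /uconj !unitmx_mul uW1 uW2 andbT.
Qed.

Lemma uconjV n (W : 'M[C]_n) A :
  unitary W -> invmx (uconj W W A) = uconj W W (invmx A).
Proof.
move=> uW; have [uA | nuA] := boolP (A \in unitmx).
  by apply: mulmx1_invmx; rewrite uconjM // mulmxV // uconj1.
by rewrite !invmx_out ?inE ?unitmx_uconj.
Qed.

Lemma is_MP_inverse_uconj m n (W1 : 'M[C]_m) (W2 : 'M[C]_n) A B :
  unitary W1 -> unitary W2 -> is_MP_inverse A B ->
  is_MP_inverse (uconj W1 W2 A) (uconj W2 W1 B).
Proof.
move=> u1 u2 [ABA BAB ABh BAh].
by split; rewrite !uconjM // ?uconj_ctmx ?ABA ?BAB ?ABh ?BAh.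
Qed.

End UnitaryEquivalence.

Section Formula.
Variables (C : numClosedFieldType) (m n : nat).
Implicit Types (N : 'M[C]_(m, n)) (Nd : 'M[C]_(n, m)) (X U : 'M[C]_m) (Y V : 'M[C]_n).

Definition corrR N Nd X : 'M[C]_m :=
  let EN := 1%:M - N *m Nd in X *m EN *m invmx X *m (EN - 1%:M).

Definition corrL N Nd Y : 'M[C]_n :=
  let FN := 1%:M - Nd *m N in (FN - 1%:M) *m invmx Y *m FN *m Y.

Definition MP_formula N Nd X Y : 'M[C]_(n, m) :=
  let R := corrR N Nd X in
  let L := corrL N Nd Y in
  (1%:M + ctmx L) *m invmx (1%:M + L *m ctmx L) *m Nd *m N
    *m (invmx Y *m Nd *m invmx X) *m N *m Nd
    *m invmx (1%:M + ctmx R *m R) *m (1%:M + ctmx R).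

Lemma corrR_uconj U V N Nd X : unitary U -> unitary V ->
  corrR (uconj U V N) (uconj V U Nd) (uconj U U X) = uconj U U (corrR N Nd X).
Proof.
move=> uU uV; rewrite /corrR uconjM // -[in LHS](uconj1 uU) -!uconjB (uconjV _ uU).
by rewrite !uconjM.
Qed.

Lemma corrL_uconj U V N Nd Y : unitary U -> unitary V ->
  corrL (uconj U V N) (uconj V U Nd) (uconj V V Y) = uconj V V (corrL N Nd Y).
Proof.
move=> uU uV; rewrite /corrL uconjM // -[in LHS](uconj1 uV) -!uconjB (uconjV _ uV).
by rewrite !uconjM.
Qed.

Lemma MP_formula_uconj U V N Nd X Y : unitary U -> unitary V ->
  MP_formula (uconj U V N) (uconj V U Nd) (uconj U U X) (uconj V V Y)
  = uconj V U (MP_formula N Nd X Y).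
Proof.
move=> uU uV; rewrite /MP_formula /= corrR_uconj // corrL_uconj //.
rewrite -[in LHS](uconj1 uU) -[in LHS](uconj1 uV).
rewrite !uconj_ctmx !uconjM // -!uconjD !(uconjV _ uU) !(uconjV _ uV).
by rewrite !uconjM.
Qed.

Lemma is_MP_inverse_formula_uconj U V N Nd X Y : unitary U -> unitary V ->
  is_MP_inverse (X *m N *m Y) (MP_formula N Nd X Y) ->
  is_MP_inverse (uconj U U X *m uconj U V N *m uconj V V Y)
    (MP_formula (uconj U V N) (uconj V U Nd) (uconj U U X) (uconj V V Y)).
Proof.
move=> uU uV /(is_MP_inverse_uconj uU uV) MP.
by rewrite !uconjM // MP_formula_uconj.
Qed.

End Formula.

Lemma is_MP_inverse_block_unit (C : numClosedFieldType) r p q (S : 'M[C]_r) :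
  S \in unitmx ->
  is_MP_inverse (block_mx S 0 0 0 : 'M_(r + p, r + q)) (block_mx (invmx S) 0 0 0).
Proof.
move=> uS; split; rewrite !mulmx_block !(mulmx0, mul0mx, addr0) ?mulmxV ?mulVmx //;
  by rewrite ?mul1mx // ctmx_block ctmx1 !ctmx0.
Qed.

Section BlockTriangularCase.
Variables (C : numClosedFieldType) (r p q : nat).
Variables (S X1 Y1 : 'M[C]_r) (X2 : 'M[C]_(p, r)) (X4 : 'M[C]_p).
Variables (Y3 : 'M[C]_(r, q)) (Y4 : 'M[C]_q).
Hypotheses (uS : S \in unitmx) (uX1 : X1 \in unitmx) (uX4 : X4 \in unitmx).
Hypotheses (uY1 : Y1 \in unitmx) (uY4 : Y4 \in unitmx).

Let N0 : 'M[C]_(r + p, r + q) := block_mx S 0 0 0.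
Let Nd0 : 'M[C]_(r + q, r + p) := block_mx (invmx S) 0 0 0.
Let X0 := block_mx X1 0 X2 X4.
Let Y0 := block_mx Y1 Y3 0 Y4.
Let K := X2 *m invmx X1.
Let H := invmx Y1 *m Y3.

Lemma mulmx_blockV : N0 *m Nd0 = block_mx 1%:M 0 0 0.
Proof. by rewrite mulmx_block !(mulmx0, mul0mx, addr0) mulmxV. Qed.

Lemma mulVmx_block : Nd0 *m N0 = block_mx 1%:M 0 0 0.
Proof. by rewrite mulmx_block !(mulmx0, mul0mx, addr0) mulVmx. Qed.

Lemma corrR_lblock : corrR N0 Nd0 X0 = block_mx 0 0 K 0.
Proof.
rewrite /corrR mulmx_blockV (scalar_mx_block r p 1) invmx_lblock //.
rewrite !opp_block_mx !add_block_mx !(subrr, subr0, sub0r, oppr0, addr0).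
rewrite !mulmx_block.
rewrite !(mulmx0, mul0mx, addr0, add0r, mulmx1, mul1mx, mulmxN, mulNmx, opprK).
by rewrite -!mulmxA mulKVmx.
Qed.

Lemma corrL_ublock : corrL N0 Nd0 Y0 = block_mx 0 H 0 0.
Proof.
rewrite /corrL mulVmx_block (scalar_mx_block r q 1) invmx_ublock //.
rewrite !opp_block_mx !add_block_mx !(subrr, subr0, sub0r, oppr0, addr0).
rewrite !mulmx_block.
rewrite !(mulmx0, mul0mx, addr0, add0r, mulmx1, mul1mx, mulmxN, mulNmx, opprK).
by rewrite mulmxKV.
Qed.

Lemma mulmx_block_triangular :
  X0 *m N0 *m Y0 = col_mx 1%:M K *m (X1 *m S *m Y1) *m row_mx 1%:M H.
Proof.
rewrite !mulmx_block !(mulmx0, mul0mx, addr0, add0r).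
rewrite mul_col_mx mul1mx mul_col_row !mulmx1 /K /H !mulmxA mulmxKV //.
by rewrite !mulmxK.
Qed.

Lemma MP_formula_block_triangular :
  MP_formula N0 Nd0 X0 Y0
  = col_mx 1%:M (ctmx H) *m invmx (1%:M + H *m ctmx H) *m invmx (X1 *m S *m Y1)
      *m invmx (1%:M + ctmx K *m K) *m row_mx 1%:M (ctmx K).
Proof.
have ZV : invmx (X1 *m S *m Y1) = invmx Y1 *m invmx S *m invmx X1.
  apply: mulmx1_invmx.
  by rewrite !mulmxA mulmxK // mulmxK // mulmxV.
have uHH := unitmx_1D_mul_ctmx H; have uKK := unitmx_1D_ctmx_mul K.
rewrite /MP_formula /= corrR_lblock corrL_ublock ZV.
rewrite -(mulmxA _ Nd0 N0) -(mulmxA _ N0 Nd0) mulmx_blockV mulVmx_block.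
rewrite invmx_lblock // invmx_ublock // !ctmx_block !ctmx0.
rewrite (scalar_mx_block r p 1) (scalar_mx_block r q 1).
rewrite !mulmx_block !(mulmx0, mul0mx, addr0, add0r, mulmx1, mul1mx).
rewrite !add_block_mx !(addr0, add0r).
rewrite !invmx_block_diag ?block_diag_mx_unit ?uHH ?uKK ?unitmx1 // !invmx1.
rewrite !mulmx_block !(mulmx0, mul0mx, addr0, add0r, mulmx1, mul1mx).
by rewrite !mul_col_mx !mul_mx_row !mul1mx !mulmx1 block_mxEv.
Qed.

Lemma is_MP_inverse_block_triangular :
  is_MP_inverse (X0 *m N0 *m Y0) (MP_formula N0 Nd0 X0 Y0).
Proof.
rewrite mulmx_block_triangular MP_formula_block_triangular.
have FF : ctmx (col_mx 1%:M K) *m col_mx 1%:M K = 1%:M + ctmx K *m K.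
  by rewrite ctmx_col ctmx1 mul_row_col mul1mx.
have GG : row_mx 1%:M H *m ctmx (row_mx 1%:M H) = 1%:M + H *m ctmx H.
  by rewrite ctmx_row ctmx1 mul_row_col mulmx1.
have uFF : ctmx (col_mx 1%:M K) *m col_mx 1%:M K \in unitmx.
  by rewrite FF unitmx_1D_ctmx_mul.
have uGG : row_mx 1%:M H *m ctmx (row_mx 1%:M H) \in unitmx.
  by rewrite GG unitmx_1D_mul_ctmx.
have uZ : X1 *m S *m Y1 \in unitmx by rewrite !unitmx_mul uX1 uS uY1.
have := is_MP_inverse_full_rank_factor uFF uGG uZ.
by rewrite FF GG ctmx_row ctmx_col ctmx1 !mulmxA.
Qed.

End BlockTriangularCase.

(* m = r + p, n = r + q; Nd = N^dagger, Md = M^dagger *)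
Theorem theorem3p3 (C : numClosedFieldType) (r p q : nat)
    (N : 'M[C]_(r + p, r + q)) (U : 'M[C]_(r + p)) (V : 'M[C]_(r + q))
    (s : 'rV[C]_r)
    (X1 : 'M[C]_r) (X2 : 'M[C]_(p, r)) (X4 : 'M[C]_p)
    (Y1 : 'M[C]_r) (Y3 : 'M[C]_(r, q)) (Y4 : 'M[C]_q)
    (X : 'M[C]_(r + p)) (Y : 'M[C]_(r + q))
    (Nd : 'M[C]_(r + q, r + p)) (Md : 'M[C]_(r + q, r + p)) :
  \rank N = r ->
  unitary U -> unitary V ->
  (forall i, 0 < s 0 i) ->
  N = U *m block_mx (diag_mx s) 0 0 0 *m ctmx V ->
  X \in unitmx -> Y \in unitmx ->
  X = U *m block_mx X1 0 X2 X4 *m ctmx U ->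
  Y = V *m block_mx Y1 Y3 0 Y4 *m ctmx V ->
  is_MP_inverse N Nd ->
  is_MP_inverse (X *m N *m Y) Md ->
  let EN := 1%:M - N *m Nd in
  let FN := 1%:M - Nd *m N in
  let R := X *m EN *m invmx X *m (EN - 1%:M) in
  let L := (FN - 1%:M) *m invmx Y *m FN *m Y in
  Md = (1%:M + ctmx L) *m invmx (1%:M + L *m ctmx L) *m Nd *m N
         *m (invmx Y *m Nd *m invmx X) *m N *m Nd
         *m invmx (1%:M + ctmx R *m R) *m (1%:M + ctmx R).
Proof.
(* the rank hypothesis is implied by the SVD form of N *)
move=> _ uU uV s_gt0 defN uX uY defX defY NNd MMd EN FN R L.
change (Md = MP_formula N Nd X Y).
change (N = uconj U V (block_mx (diag_mx s) 0 0 0)) in defN.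
change (X = uconj U U (block_mx X1 0 X2 X4)) in defX.
change (Y = uconj V V (block_mx Y1 Y3 0 Y4)) in defY.
have uS : diag_mx s \in unitmx.
  by rewrite unitmxE det_diag unitfE; apply/prodf_neq0 => i _; apply: lt0r_neq0.
have /andP [uX1 uX4] : (X1 \in unitmx) && (X4 \in unitmx).
  by rewrite -(unitmx_lblock _ X2) -(unitmx_uconj _ uU) -defX.
have /andP [uY1 uY4] : (Y1 \in unitmx) && (Y4 \in unitmx).
  by rewrite -(unitmx_ublock _ Y3) -(unitmx_uconj _ uV) -defY.
have NdE : Nd = uconj V U (block_mx (invmx (diag_mx s)) 0 0 0).
  rewrite -(uconjKV Nd uV uU); congr uconj.
  apply: (is_MP_inverse_uniq _ (is_MP_inverse_block_unit p q uS)).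
  have := is_MP_inverse_uconj (unitary_ctmx uU) (unitary_ctmx uV) NNd.
  by rewrite defN uconjK.
have := is_MP_inverse_block_triangular X2 Y3 uS uX1 uX4 uY1 uY4.
move/(is_MP_inverse_formula_uconj uU uV); rewrite -defN -NdE -defX -defY.
exact: is_MP_inverse_uniq MMd.
Qed.
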